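(* Let $\mathbb{T}(n,p)$ denote the expected number of explored nodes of the branch-and-bound algorithm for minimum dominating set described in the context, run on $G\sim\mathcal{G}(n,p)$. Then: (a) If $p=p(n)$ satisfies $pn\to\infty$ as $n\to\infty$, then $\mathbb{T}(n,p)=2^{o(n)}$ (the algorithm takes subexponential time on average). (b) If $p=c/n$ where $c\ge 20$ is a constant, then there is a constant $\epsilon\ge 0.01$ (independent of $n$) such that $\mathbb{T}(n,p)\le (2-\epsilon)^n$ for all sufficiently large $n$.
   Context: $\mathcal{G}(n,p)$ is the binomial random graph on vertex set $V=\{v_1,\dots,v_n\}$ in which each of the $\binom n2$ possible edges is present independently with probability $p$. A set $S\subseteq V$ is dominating if every vertex is in $S$ or adjacent to a vertex of $S$. Branch-and-bound algorithm: fix the order $v_1,\dots,v_n$. Nodes of the search tree are pairs $(\vec x,\delta)$ with $\delta\in\{0,\dots,n\}$ and $\vec x\in\{0,1\}^n$ with $x_i=1$ for all $i>\delta$; the node represents the vertex set $\{v_i: x_i=1\}$. The root is $((1,\dots,1),0)$. A node $(\vec x,\delta)$ with $\delta<n$ has a left child $(\vec x,\delta+1)$ (i.e. $x_{\delta+1}=1$, vertex $v_{\delta+1}$ kept) and a right child $(\vec x',\delta+1)$ where $\vec x'$ equals $\vec x$ except $x'_{\delta+1}=0$ (vertex $v_{\delta+1}$ removed). A node is feasible if its vertex set is a dominating set of $G$. The score of a node is $u(\vec x,\delta)=|\vec x|-n+\delta$, where $|\vec x|=\sum_i x_i$; equivalently, the number of indices $i\le\delta$ with $x_i=1$. Initially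 the root is explored. At each step, among the feasible nodes that are children of already-explored nodes and have not yet been explored, one with minimum score is explored (ties broken arbitrarily). The algorithm stops as soon as a node of depth $\delta=n$ is explored; its vertex set is returned as a minimum dominating set. The complexity is the number of explored nodes. *)

From HB Require Import structures.
From Stdlib Require Import Reals.
From mathcomp Require Import all_boot.

(* mathcomp rebinds the %R key; give Stdlib's R_scope the key %Re. *)
Delimit Scope R_scope with Re.

Set Implicit Arguments.
Unset Strict Implicit.
Unset Printing Implicit Defensive.

Definition pairs (n : nat) : {set 'I_n * 'I_n} := [set e : 'I_n * 'I_n | (val e.1 < val e.2)%N].

(* A graph is given by its edge set E, a subset of [pairs n]. *)
Definition adj (n : nat) (E : {set 'I_n * 'I_n}) (u v : 'I_n) : bool :=
  ((u, v) \in E) || ((v, u) \in E).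

Definition dominating (n : nat) (E : {set 'I_n * 'I_n}) (S : {set 'I_n}) : bool :=
  [forall v : 'I_n, (v \in S) || [exists u in S, adj E u v]].

(* A node (x, delta): x is encoded by its vertex set {v_i : x_i = 1}
   (index i-1 in 'I_n), delta in {0,...,n}. *)
Definition node (n : nat) := ({set 'I_n} * 'I_n.+1)%type.

Definition bb_root (n : nat) : node n := ([set: 'I_n], ord0).

(* score u(x,delta) = number of indices i <= delta (1-based) with x_i = 1. *)
Definition score (n : nat) (x : node n) : nat :=
  #|[set i in x.1 | (val i < val x.2)%N]|.

(* y is a child of x: x has depth delta < n, and y is either
   (x, delta+1) (left child) or x with v_{delta+1} removed, depth delta+1
   (right child).  v_{delta+1} has 0-based index delta. *)
Definition is_child (n : nat) (x y : node n) : bool :=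
  [&& (val x.2 < n)%N, val y.2 == (val x.2).+1 &
      (y.1 == x.1) || (y.1 == x.1 :\: [set i : 'I_n | val i == val x.2])].

Definition available (n : nat) (E : {set 'I_n * 'I_n}) (prev : seq (node n))
    (y : node n) : bool :=
  [&& dominating E y.1, y \notin prev & has (fun x => is_child x y) prev].

(* y may be explored next: it is available and of minimum score among the
   available nodes (ties broken arbitrarily). *)
Definition step_ok (n : nat) (E : {set 'I_n * 'I_n}) (prev : seq (node n))
    (y : node n) : bool :=
  available E prev y &&
  [forall z : node n, available E prev z ==> (score y <= score z)%N].

Fixpoint steps_ok (n : nat) (E : {set 'I_n * 'I_n}) (prev rest : seq (node n))
    : bool :=
  match rest with
  | [::] => true
  | y :: rest' => step_ok E prev y && steps_ok E (rcons prev y) rest'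
  end.

(* A complete run of the algorithm: the sequence of explored nodes, starting
   with the root, each subsequent one chosen by the rule above, no node of
   depth n explored before the last one, and the last one of depth n
   (at which point the algorithm stops). *)
Definition complete_run (n : nat) (E : {set 'I_n * 'I_n}) (s : seq (node n))
    : bool :=
  match s with
  | [::] => false
  | r :: rest =>
      [&& r == bb_root n, steps_ok E [:: r] rest,
          all (fun x : node n => (val x.2 < n)%N) (belast r rest) &
          val (last r rest).2 == n]
  end.

(* Number of explored nodes on graph E, for the worst tie-breaking
   (maximum over all complete runs; runs consist of distinct nodes, so their
   length is at most #|node n|). *)
Definition bb_count (n : nat) (E : {set 'I_n * 'I_n}) : nat :=
  \max_(k < #|{: node n}|.+2 | [exists t : k.-tuple (node n), complete_run E t])
     val k.

Definition gnp_prob (n : nat) (p : R) (E : {set 'I_n * 'I_n}) : R :=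
  (pow p #|E| * pow (1 - p) (#|pairs n| - #|E|)%N)%Re.

Definition expect_gnp (n : nat) (p : R) (f : {set 'I_n * 'I_n} -> R) : R :=
  \big[Rplus/0%Re]_(E : {set 'I_n * 'I_n} | E \subset pairs n)
     (gnp_prob p E * f E)%Re.

Definition T_bb (n : nat) (p : R) : R :=
  @expect_gnp n p (fun E => INR (bb_count E)).

(* If D is any dominating set of G, every node explored
   by the algorithm has score at most |D| (some node on the path of prefixes
   of D is always available with score <= |D|), and is "tail-full": all
   vertices from its depth on are kept.  Such a node is determined by its
   depth and a vertex set of size <= |D|, so the number of explored nodes is
   at most (n+1) #{S : |S| <= |D|} <= (n+1) (1+t)^n t^-|D| for 0 < t <= 1.

   Take D = first s0 vertices + the vertices U they leave
   undominated.  Expanding t^-|U| = sum_{J ⊆ U} (1/t - 1)^|J| and using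
   P(J ⊆ U) <= (1-p)^(s0 |J|) gives
     T(n,p) <= (n+1) (1+t)^n t^-s0 (1 + (1/t - 1)(1-p)^s0)^n.

   With s0 = n/K this is at most (n+1) ((1+t) v B)^n when
   t^-1 <= v^K, where B is the last bracket; (a) and (b) follow by choosing
   t, v, K: for p = c/n take K = 4, t = 1/2; if pn -> oo take t = v - 1
   arbitrarily small and K large. *)
From HB Require Import structures.
From Stdlib Require Import Reals Lra.
From mathcomp Require Import all_boot zify.
From mathcomp Require Import Rstruct.

Set Implicit Arguments.
Unset Strict Implicit.
Unset Printing Implicit Defensive.

Section SearchTree.
Variables (n : nat) (E : {set 'I_n * 'I_n}).

(* Every node reachable from the root keeps all vertices of index at least
   its depth: only the vertices already branched on can have been removed. *)
Definition tail_full (x : node n) : bool :=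
  [forall i : 'I_n, (val x.2 <= val i)%N ==> (i \in x.1)].

Definition prefix_node (D : {set 'I_n}) (d : 'I_n.+1) : node n :=
  (D :|: [set i : 'I_n | (val d <= val i)%N], d).

Lemma dominating_superset (D D' : {set 'I_n}) :
  D \subset D' -> dominating E D -> dominating E D'.
Proof.
move=> sDD' /forallP domD; apply/forallP => v; case/orP: (domD v) => [vD|].
  by rewrite (subsetP sDD' _ vD).
case/existsP => u /andP[uD auv]; apply/orP; right; apply/existsP; exists u.
by rewrite (subsetP sDD' _ uD).
Qed.

Section Budget.
(* Fix a dominating set D; its size bounds the score of every explored node. *)
Variable D : {set 'I_n}.
Hypothesis domD : dominating E D.

Lemma prefix_node_root : prefix_node D ord0 = bb_root n.
Proof. by congr pair; apply/setP => i; rewrite !inE orbT. Qed.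

(* Key observation: as long as the root has been explored and no leaf has,
   the path of prefix nodes of D supplies an available node of score at most
   |D|: take the deepest explored prefix node and its child towards D. *)
Lemma available_within_budget (prev : seq (node n)) :
  bb_root n \in prev -> all (fun x : node n => (val x.2 < n)%N) prev ->
  exists2 z, available E prev z & (score z <= #|D|)%N.
Proof.
move=> rootp /allP inner.
have P0 : prefix_node D ord0 \in prev by rewrite prefix_node_root.
have [d deep maxd] := @arg_maxnP _ ord0 (fun d => prefix_node D d \in prev) val P0.
have dn : (val d < n)%N := inner _ deep.
pose d' : 'I_n.+1 := Ordinal (dn : (val d).+1 < n.+1)%N.
exists (prefix_node D d'); last first.
  apply: subset_leq_card; apply/subsetP => i; rewrite !inE /=.
  by case/andP => /orP[// | ?] ?; lia.
apply/and3P; split.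
- exact: dominating_superset (subsetUl _ _) domD.
- by apply/negP => /maxd /=; lia.
- apply/hasP; exists (prefix_node D d) => //; rewrite /is_child /= dn eqxx /=.
  have vd (i : 'I_n) : val i = val d -> i = Ordinal dn by move=> e; apply: val_inj.
  case: (boolP (Ordinal dn \in D)) => dD; apply/orP; [left|right];
    apply/eqP/setP => i; rewrite !inE;
    case: (ltngtP (val i) (val d)) => h; rewrite ?orbT ?orbF ?andbT //=.
  + by rewrite (vd i h).
  + by rewrite (vd i h) (negbTE dD).
Qed.

Definition run_invariant (L : seq (node n)) : bool :=
  [&& bb_root n \in L, all tail_full L,
      all (fun x => score x <= #|D|)%N L & uniq L].

(* One exploration step preserves the invariant: the new node is a child of
   a tail-full node, and by minimality its score is at most that of the node
   given by [available_within_budget]. *)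
Lemma step_keeps_invariant prev y :
  run_invariant prev -> all (fun x : node n => (val x.2 < n)%N) prev ->
  step_ok E prev y -> run_invariant (rcons prev y).
Proof.
case/and4P=> rootp full budget uniqp inner.
case/andP=> /and3P[_ ynew /hasP[x xp xy]] /forallP minimal.
have [z az bz] := available_within_budget rootp inner.
have yz := implyP (minimal z) az.
rewrite /run_invariant mem_rcons in_cons rootp orbT /= !all_rcons full budget.
rewrite rcons_uniq ynew uniqp (leq_trans yz bz) !andbT /=.
have /forallP xfull := allP full x xp.
case/and3P: xy => _ /eqP ydepth ychoice.
apply/forallP => i; apply/implyP; rewrite ydepth => yi.
have := implyP (xfull i) (ltnW yi).
case/orP: ychoice => /eqP ->; rewrite ?inE // => ->.
by rewrite andbT neq_ltn yi orbT.
Qed.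

Lemma steps_keep_invariant rest prev x0 :
  steps_ok E (rcons prev x0) rest ->
  all (fun x : node n => (val x.2 < n)%N) (prev ++ belast x0 rest) ->
  run_invariant (rcons prev x0) -> run_invariant (rcons prev x0 ++ rest).
Proof.
elim: rest prev x0 => [|y rest IH] prev x0 /=; first by move=> _ _; rewrite cats0.
case/andP => st sts; rewrite all_cat /= => /and3P[dp dx0 dr] inv.
rewrite -cat_rcons; apply: IH => //; first by rewrite all_cat all_rcons dx0 dp.
by apply: step_keeps_invariant; rewrite ?all_rcons ?dx0.
Qed.

Lemma complete_run_invariant s : complete_run E s -> run_invariant s.
Proof.
case: s => [//|r rest] /and4P[/eqP-> sts inner _].
apply: (@steps_keep_invariant rest [::]) => //.
rewrite /run_invariant /= mem_seq1 eqxx !andbT /=; apply/andP; split.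
  by apply/forallP => i; rewrite inE.
have score_root : score (bb_root n) = 0%N.
  by apply/eqP; rewrite cards_eq0; apply/eqP/setP => i; rewrite !inE ltn0 andbF.
by rewrite score_root.
Qed.

Definition budget_nodes : {set node n} :=
  [set x | tail_full x & (score x <= #|D|)%N].

(* A complete run has distinct nodes, all in [budget_nodes]. *)
Lemma bb_count_le_budget_nodes : (bb_count E <= #|budget_nodes|)%N.
Proof.
apply/bigmax_leqP => k /existsP[t /complete_run_invariant /and4P[_ full budget uniqt]].
rewrite -[val k](size_tuple t) -(card_uniqP uniqt); apply: subset_leq_card.
by apply/subsetP => x xt; rewrite inE (allP full x xt) (allP budget x xt).
Qed.

(* A tail-full node is determined by its depth and its score set (the kept
   vertices before its depth), which has size at most |D|. *)
Lemma card_budget_nodes :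
  (#|budget_nodes| <= n.+1 * #|[set S : {set 'I_n} | (#|S| <= #|D|)%N]|)%N.
Proof.
pose code (x : node n) := (x.2, [set i in x.1 | (val i < val x.2)%N]).
have code_inj : {in budget_nodes &, injective code}.
  move=> [x1 d] [y1 d']; rewrite !inE => /andP[/forallP xfull _] /andP[/forallP yfull _].
  case=> /= ed eprefix; subst d'; congr pair; apply/setP => i.
  have := congr1 (fun S : {set 'I_n} => i \in S) eprefix; rewrite !inE /=.
  case: (ltnP (val i) (val d)) => h; rewrite ?andbT ?andbF //.
  by rewrite (implyP (xfull i) h) (implyP (yfull i) h).
rewrite -(card_in_imset code_inj).
have codes : code @: budget_nodes \subset
    setX [set: 'I_n.+1] [set S : {set 'I_n} | (#|S| <= #|D|)%N].
  by apply/subsetP => _ /imsetP[x + ->]; rewrite !inE => /andP[].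
by apply: leq_trans (subset_leq_card codes) _; rewrite cardsX cardsT card_ord.
Qed.

End Budget.

Lemma bb_count_le_small_sets (D : {set 'I_n}) : dominating E D ->
  (bb_count E <= n.+1 * #|[set S : {set 'I_n} | (#|S| <= #|D|)%N]|)%N.
Proof.
move=> domD; exact: leq_trans (bb_count_le_budget_nodes domD) (card_budget_nodes D).
Qed.

End SearchTree.

Open Scope R_scope.

Lemma Rle_big_sum (I : finType) (P : pred I) (F G : I -> R) :
  (forall i, P i -> F i <= G i) ->
  \big[Rplus/0]_(i | P i) F i <= \big[Rplus/0]_(i | P i) G i.
Proof.
move=> FG; apply: (big_ind2 (fun x y => x <= y)) => //; first lra.
by move=> *; apply: Rplus_le_compat.
Qed.

Lemma INR_big_sum (I : finType) (P : pred I) (F : I -> nat) :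
  INR (\sum_(i | P i) F i) = \big[Rplus/0]_(i | P i) INR (F i).
Proof. by apply: (big_morph INR) => //; apply: plus_INR. Qed.

Lemma prod_indicator (I : finType) (A : {pred I}) (a : R) :
  \big[Rmult/1]_(i : I) (if i \in A then a else 1) = a ^ #|A|.
Proof.
by rewrite -big_mkcond big_const; elim: #|A| => //= k ->.
Qed.

(* Generating-function identity behind all the binomial computations:
   expanding the product over I chooses, for each i, the term a (i in J,
   allowed only for i in X) or the term b / 1 (i outside J, in P or not). *)
Lemma sum_subsets_weights (I : finType) (X P : {set I}) (a b : R) :
  \big[Rplus/0]_(J : {set I} | J \subset X) (a ^ #|J| * b ^ #|P :\: J|)
  = \big[Rmult/1]_(i : I)
      ((if i \in X then a else 0) + (if i \in P then b else 1)).
Proof.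
rewrite bigA_distr big_mkcond /=; apply: eq_bigr => J _.
case: ifP => [JX | /negbT/subsetPn[i iJ iX]]; last first.
  by rewrite (bigD1 i) //= iJ (negbTE iX) Rmult_0_l.
rewrite -!prod_indicator -big_split /=; apply: eq_bigr => i _.
rewrite !inE; case: ifP => iJ /=; last lra.
by rewrite (subsetP JX _ iJ); lra.
Qed.

Lemma sum_subsets_pow (I : finType) (X : {set I}) (w : R) :
  \big[Rplus/0]_(J : {set I} | J \subset X) w ^ #|J| = (1 + w) ^ #|X|.
Proof.
rewrite -prod_indicator.
transitivity (\big[Rplus/0]_(J : {set I} | J \subset X)
                (w ^ #|J| * 0 ^ #|set0 :\: J|)).
  by apply: eq_bigr => J _; rewrite set0D cards0 /= Rmult_1_r.
rewrite sum_subsets_weights; apply: eq_bigr => i _.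
by rewrite inE; case: ifP => _; lra.
Qed.

Lemma sum_sets_pow (I : finType) (w : R) :
  \big[Rplus/0]_(J : {set I}) w ^ #|J| = (1 + w) ^ #|I|.
Proof. by rewrite -cardsT -sum_subsets_pow; apply: eq_bigl => J; rewrite subsetT. Qed.

Lemma card_small_sets (I : finType) (t : R) (k : nat) : 0 < t <= 1 ->
  INR #|[set S : {set I} | (#|S| <= k)%N]| <= (1 + t) ^ #|I| * (/ t) ^ k.
Proof.
move=> t01; have it1 : 1 <= / t by rewrite -Rinv_1; apply: Rinv_le_contravar; lra.
rewrite -sum1_card INR_big_sum.
apply: Rle_trans (_ : \big[Rplus/0]_(S in [set S : {set I} | (#|S| <= k)%N])
                        (t ^ #|S| * (/ t) ^ k) <= _).
  apply: Rle_big_sum => S; rewrite inE => small.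
  rewrite -(subnKC small) pow_add -Rmult_assoc -Rpow_mult_distr Rinv_r; last lra.
  by rewrite pow1 Rmult_1_l /=; apply: pow_R1_Rle.
rewrite -sum_sets_pow big_distrl /= big_mkcond /=; apply: Rle_big_sum => S _.
case: ifP => _; first lra.
by apply: Rmult_le_pos; apply: pow_le; lra.
Qed.

(* In a product measure with edge probability p on the pairs P, the event
   "no pair of F is present" has probability (1-p)^|F :&: P|. *)
Lemma prob_avoid (I : finType) (P F : {set I}) (p : R) :
  \big[Rplus/0]_(E : {set I} | E \subset P :\: F)
     (p ^ #|E| * (1 - p) ^ (#|P| - #|E|))
  = (1 - p) ^ #|F :&: P|.
Proof.
transitivity (\big[Rplus/0]_(E : {set I} | E \subset P :\: F)
                (p ^ #|E| * (1 - p) ^ #|P :\: E|)).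
  apply: eq_bigr => E; rewrite subsetD => /andP[EP _].
  by rewrite cardsD (setIidPr EP).
rewrite sum_subsets_weights -prod_indicator; apply: eq_bigr => i _; rewrite !inE.
by case: (i \in F); case: (i \in P) => /=; lra.
Qed.

Lemma pow_decr (x : R) (a b : nat) : 0 <= x <= 1 -> (a <= b)%N -> x ^ b <= x ^ a.
Proof.
move=> x01 ab; rewrite -(subnKC ab) pow_add.
have xa : 0 <= x ^ a by apply: pow_le; lra.
have xba : x ^ (b - a) <= 1 by rewrite -(pow1 (b - a)); apply: pow_incr; lra.
nra.
Qed.

Lemma gnp_prob_ge0 (n : nat) (p : R) (E : {set 'I_n * 'I_n}) :
  0 <= p <= 1 -> 0 <= gnp_prob p E.
Proof. by move=> p01; apply: Rmult_le_pos; apply: pow_le; lra. Qed.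

Section FirstBlock.
(* The dominating set used in the analysis: the first s0 vertices together
   with the vertices they leave undominated. *)
Variables (n s0 : nat).
Hypothesis s0n : (s0 <= n)%N.

Definition first_block : {set 'I_n} := [set i : 'I_n | (val i < s0)%N].

Lemma card_first_block : #|first_block| = s0.
Proof.
have -> : first_block = [set widen_ord s0n i | i : 'I_s0].
  apply/setP => i; rewrite inE; apply/idP/imsetP => [lt_is0 | [j _ ->]].
    by exists (Ordinal lt_is0) => //; apply: val_inj.
  by rewrite /= ltn_ord.
rewrite card_imset ?card_ord // => i j /(congr1 val) /= /val_inj; exact.
Qed.

Definition undominated (E : {set 'I_n * 'I_n}) : {set 'I_n} :=
  [set v | (v \notin first_block) && ~~ [exists u in first_block, adj E u v]].

Lemma dominating_first_block (E : {set 'I_n * 'I_n}) :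
  dominating E (first_block :|: undominated E).
Proof.
apply/forallP => v; rewrite in_setU; case: (boolP (v \in first_block)) => //= vF.
case: (boolP [exists u in first_block, adj E u v]) => [/existsP[u /andP[uF uv]] | nadj].
  by apply/orP; right; apply/existsP; exists u; rewrite in_setU uF uv.
by rewrite inE vF nadj.
Qed.

Lemma undominated_disjoint (E : {set 'I_n * 'I_n}) (J : {set 'I_n}) :
  J \subset undominated E -> [disjoint J & first_block].
Proof.
move=> JU; apply/pred0P => i /=; apply/negbTE/negP => /andP[iJ iF].
by move: (subsetP JU _ iJ); rewrite inE iF.
Qed.

Definition cross_pairs (J : {set 'I_n}) : {set 'I_n * 'I_n} :=
  [set e in pairs n | ((e.1 \in J) && (e.2 \in first_block))
                      || ((e.1 \in first_block) && (e.2 \in J))].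

(* For J disjoint from the first block, ordering the pairs of J x first_block
   is injective, so there are |J| * s0 cross pairs. *)
Lemma card_cross_pairs (J : {set 'I_n}) :
  [disjoint J & first_block] -> (#|J| * s0 <= #|cross_pairs J|)%N.
Proof.
move=> dJ.
pose sort2 (x : 'I_n * 'I_n) := if (val x.1 < val x.2)%N then x else (x.2, x.1).
pose unsort (e : 'I_n * 'I_n) := if e.1 \in J then e else (e.2, e.1).
have sortK : {in setX J first_block, cancel sort2 unsort}.
  case=> u v; rewrite inE /= => /andP[uJ vF].
  have vJ : v \notin J by rewrite (disjointFl dJ vF).
  by rewrite /sort2 /unsort; case: ltnP => _ /=; rewrite ?uJ ?(negbTE vJ).
rewrite -card_first_block -cardsX -(card_in_imset (can_in_inj sortK)).
apply: subset_leq_card; apply/subsetP => _ /imsetP[[u v] /[!inE] /= /andP[uJ vF] ->].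
have uF : u \notin first_block by rewrite (disjointFr dJ uJ).
have uv : val u != val v by apply/eqP => /val_inj euv; move: uF; rewrite euv inE vF.
rewrite /sort2; case: ifP => [-> | vu] /=; first by rewrite uJ vF.
by rewrite ltn_neqAle eq_sym uv leqNgt vu uJ vF orbT.
Qed.

Lemma undominated_avoids (E : {set 'I_n * 'I_n}) (J : {set 'I_n}) :
  E \subset pairs n -> J \subset undominated E -> E \subset pairs n :\: cross_pairs J.
Proof.
move=> EP JU; apply/subsetP => -[a b] eE; rewrite in_setD (subsetP EP _ eE) andbT.
apply/negP; rewrite inE => /andP[_ /orP[/andP[aJ bF] | /andP[aF bJ]]] /=.
  move: (subsetP JU _ aJ); rewrite inE => /andP[_ /existsP]; apply.
  by exists b; rewrite bF /adj eE orbT.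
move: (subsetP JU _ bJ); rewrite inE => /andP[_ /existsP]; apply.
by exists a; rewrite aF /adj eE.
Qed.

(* Deterministic bound in terms of the undominated set U:
   count <= (n+1) (1+t)^n t^-s0 t^-|U|, with t^-|U| expanded binomially as
   the sum over J ⊆ U of (1/t - 1)^|J|. *)
Lemma bb_count_le_undominated (t : R) (E : {set 'I_n * 'I_n}) : 0 < t <= 1 ->
  INR (bb_count E) <= INR n.+1 * (1 + t) ^ n * (/ t) ^ s0 *
     \big[Rplus/0]_(J : {set 'I_n} | J \subset undominated E) (/ t - 1) ^ #|J|.
Proof.
move=> t01; set U := undominated E.
have count : (bb_count E <= n.+1 * #|[set S : {set 'I_n} | (#|S| <= s0 + #|U|)%N]|)%N.
  apply: leq_trans (bb_count_le_small_sets (dominating_first_block E)) _.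
  rewrite leq_mul2l; apply/orP; right; apply: subset_leq_card.
  apply/subsetP => S; rewrite !inE => /leq_trans; apply.
  by rewrite -card_first_block cardsU leq_subr.
apply: Rle_trans (le_INR _ _ (leP count)) _.
rewrite mult_INR sum_subsets_pow (_ : 1 + (/ t - 1) = / t); last lra.
rewrite !Rmult_assoc -pow_add; apply: Rmult_le_compat_l; first exact: pos_INR.
by have := card_small_sets 'I_n (s0 + #|U|) t01; rewrite card_ord.
Qed.

(* Averaged over G(n,p), a fixed J contributes at most its weight times the
   probability (1-p)^(s0 |J|) that J has no neighbour in the first block. *)
Lemma expected_undominated_weight (p t : R) (J : {set 'I_n}) :
  0 <= p <= 1 -> 0 < t <= 1 ->
  \big[Rplus/0]_(E : {set 'I_n * 'I_n} | E \subset pairs n)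
     (gnp_prob p E * (if J \subset undominated E then (/ t - 1) ^ #|J| else 0))
  <= ((/ t - 1) * (1 - p) ^ s0) ^ #|J|.
Proof.
move=> p01 t01.
have it1 : 1 <= / t by rewrite -Rinv_1; apply: Rinv_le_contravar; lra.
have w0 : 0 <= / t - 1 by lra.
have wJ : 0 <= (/ t - 1) ^ #|J| by apply: pow_le.
have q0 : 0 <= (1 - p) ^ s0 by apply: pow_le; lra.
have [dJ | /negP ndJ] := boolP [disjoint J & first_block]; last first.
  apply: Rle_trans (_ : 0 <= _); last by apply: pow_le; nra.
  rewrite big1 => [|E _]; first exact: Rle_refl.
  by case: ifP => [/undominated_disjoint // | _]; rewrite Rmult_0_r.
(* Only graphs avoiding all cross pairs of J contribute. *)
have contribution (E : {set 'I_n * 'I_n}) : E \subset pairs n ->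
    gnp_prob p E * (if J \subset undominated E then (/ t - 1) ^ #|J| else 0)
    <= if E \subset pairs n :\: cross_pairs J
       then gnp_prob p E * (/ t - 1) ^ #|J| else 0.
  move=> EP; have term0 : 0 <= gnp_prob p E * (/ t - 1) ^ #|J|.
    by apply: Rmult_le_pos => //; apply: gnp_prob_ge0.
  case: ifP => JU; first by rewrite (undominated_avoids EP JU); exact: Rle_refl.
  by rewrite Rmult_0_r; case: ifP => _; [exact: term0 | exact: Rle_refl].
apply: Rle_trans (_ : \big[Rplus/0]_(E : {set 'I_n * 'I_n} |
                         E \subset pairs n :\: cross_pairs J)
                         (gnp_prob p E * (/ t - 1) ^ #|J|) <= _).
  rewrite big_mkcond [X in _ <= X]big_mkcond /=; apply: Rle_big_sum => E _.
  have [EP | nEP] := boolP (E \subset pairs n); first exact: contribution.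
  case: ifP => [/subset_trans/(_ (subsetDl _ _)) EP | _]; last exact: Rle_refl.
  by rewrite EP in nEP.
rewrite -big_distrl /= prob_avoid (setIidPl _); last first.
  by apply/subsetP => e; rewrite inE => /andP[].
rewrite Rpow_mult_distr Rmult_comm; apply: Rmult_le_compat_l => //.
rewrite -pow_mult; apply: pow_decr; first lra.
by rewrite multE mulnC; apply: card_cross_pairs.
Qed.

Lemma T_bb_le (p t : R) : 0 <= p <= 1 -> 0 < t <= 1 ->
  T_bb n p <= INR n.+1 * (1 + t) ^ n * (/ t) ^ s0 *
              (1 + (/ t - 1) * (1 - p) ^ s0) ^ n.
Proof.
move=> p01 t01; set C := INR n.+1 * (1 + t) ^ n * (/ t) ^ s0.
have C0 : 0 <= C.
  have it0 : 0 <= / t by apply: Rlt_le; apply: Rinv_0_lt_compat; lra.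
  by apply: Rmult_le_pos; [apply: Rmult_le_pos; [apply: pos_INR|]|]; apply: pow_le; lra.
rewrite /T_bb /expect_gnp.
pose weight (E : {set 'I_n * 'I_n}) (J : {set 'I_n}) : R := if J \subset undominated E then (/ t - 1) ^ #|J| else 0.
apply: Rle_trans (_ : \big[Rplus/0]_(E : {set 'I_n * 'I_n} | E \subset pairs n)
   (gnp_prob p E * (C * \big[Rplus/0]_(J : {set 'I_n}) weight E J)) <= _).
  apply: Rle_big_sum => E _; apply: Rmult_le_compat_l; first exact: gnp_prob_ge0.
  by rewrite -big_mkcond; apply: bb_count_le_undominated.
rewrite (_ : \big[Rplus/0]_(E : {set 'I_n * 'I_n} | E \subset pairs n) _ =
   C * \big[Rplus/0]_(J : {set 'I_n}) \big[Rplus/0]_(E : {set 'I_n * 'I_n} |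
       E \subset pairs n) (gnp_prob p E * weight E J)); last first.
  rewrite [in RHS]exchange_big big_distrr /=; apply: eq_bigr => E _.
  by rewrite !big_distrr /=; apply: eq_bigr => J _; ring.
apply: Rmult_le_compat_l => //.
rewrite -[in X in _ <= X](card_ord n) -sum_sets_pow; apply: Rle_big_sum => J _.
exact: expected_undominated_weight.
Qed.

End FirstBlock.

Lemma exp_monotone (x y : R) : x <= y -> exp x <= exp y.
Proof.
case/Rle_lt_or_eq_dec => [lt_xy | ->]; last exact: Rle_refl.
exact/Rlt_le/exp_increasing.
Qed.

Lemma exp_pow (x : R) (k : nat) : exp x ^ k = exp (x * INR k).
Proof.
elim: k => [|k IH]; first by rewrite /= Rmult_0_r exp_0.
by rewrite S_INR /= IH -exp_plus; congr exp; ring.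
Qed.

(* Tail estimate: (1-p)^s <= exp(-ps) <= exp(-L) as soon as L <= ps. *)
Lemma tail_prob_le (p L : R) (s : nat) :
  0 <= p <= 1 -> L <= p * INR s -> (1 - p) ^ s <= exp (- L).
Proof.
move=> p01 Lps; apply: Rle_trans (_ : exp (- p) ^ s <= _).
  by apply: pow_incr; split; [lra | have := exp_ineq1_le (- p); lra].
by rewrite exp_pow; apply: exp_monotone; lra.
Qed.

Lemma divn_lower_bound (n K : nat) : (0 < K)%N -> INR n - INR K <= INR (n %/ K) * INR K.
Proof.
move=> K0; have : (n <= n %/ K * K + K)%N.
  by rewrite {1}(divn_eq n K) leq_add2l ltnW // ltn_pmod.
by move/leP/le_INR; rewrite plus_INR mult_INR; lra.
Qed.

Lemma pow_divn_le (x v : R) (K n : nat) :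
  0 <= x -> 1 <= v -> x <= v ^ K -> x ^ (n %/ K) <= v ^ n.
Proof.
move=> x0 v1 xvK; apply: Rle_trans (_ : (v ^ K) ^ (n %/ K) <= _).
  exact: pow_incr.
rewrite -pow_mult; apply: Rle_pow => //; apply/leP.
by rewrite multE mulnC leq_divM.
Qed.

Lemma bernoulli2 (h : R) (k : nat) : 0 <= h ->
  1 + INR k * h + INR k * (INR k - 1) / 2 * h ^ 2 <= (1 + h) ^ k.
Proof.
move=> h0; elim: k => [|k IH]; first by simpl; lra.
have k0 := pos_INR k; rewrite S_INR /=.
have cubic : 0 <= INR k * (INR k - 1) / 2 * h ^ 3.
  case: k IH k0 => [|k] IH k0; first by simpl; lra.
  rewrite S_INR; have := pos_INR k => k1.
  by apply: Rmult_le_pos; [nra | apply: pow_le].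
have : (1 + h) * (1 + INR k * h + INR k * (INR k - 1) / 2 * h ^ 2)
       <= (1 + h) * (1 + h) ^ k by apply: Rmult_le_compat_l; lra.
simpl in cubic |- *; nra.
Qed.

Lemma linear_le_geometric (r : R) : 1 < r ->
  exists N : nat, forall n : nat, (N <= n)%N -> INR n.+1 <= r ^ n.
Proof.
move=> r1; set h := r - 1.
have [N HN] := INR_unbounded (1 + 4 / (h * h)).
exists N.+1 => n Nn.
have nN : INR N.+1 <= INR n by apply/le_INR/leP.
rewrite S_INR in nN.
have := bernoulli2 n (_ : 0 <= h); rewrite (_ : 1 + h = r); last by rewrite /h; ring.
move=> /(_ ltac:(rewrite /h; lra)); apply: Rle_trans.
have n2 : (INR n - 1) * (h * h) >= 4.
  have hh : 0 < h * h by rewrite /h; nra.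
  have : 4 / (h * h) < INR n - 1 by lra.
  move=> /(Rmult_lt_compat_r _ _ _ hh); rewrite /Rdiv Rmult_assoc Rinv_l; lra.
have : 0 <= INR n * h by apply: Rmult_le_pos; [apply: pos_INR | rewrite /h; lra].
rewrite S_INR /=; nra.
Qed.

Lemma T_bb_eventually_le_pow (p : nat -> R) (rho sig t v : R) (K N0 : nat) :
  0 < sig < rho -> 0 < t <= 1 -> 1 <= v -> / t <= v ^ K ->
  (forall n, (N0 <= n)%N -> 0 <= p n <= 1 /\
      (1 + t) * v * (1 + (/ t - 1) * (1 - p n) ^ (n %/ K)) <= sig) ->
  exists N, forall n, (N <= n)%N -> T_bb n (p n) <= rho ^ n.
Proof.
move=> sig_rho t01 v1 tvK bracket.
have [N1 HN1] : exists N1 : nat, forall n, (N1 <= n)%N -> INR n.+1 <= (rho / sig) ^ n.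
  apply: linear_le_geometric; apply: (Rmult_lt_reg_r sig); first lra.
  by rewrite Rmult_1_l /Rdiv Rmult_assoc Rinv_l; lra.
exists (maxn N0 N1) => n; rewrite geq_max => /andP[n0 n1].
have [p01 bracket_n] := bracket n n0.
set B := 1 + (/ t - 1) * (1 - p n) ^ (n %/ K) in bracket_n *.
have it1 : 1 <= / t by rewrite -Rinv_1; apply: Rinv_le_contravar; lra.
have B0 : 0 <= B.
  have : 0 <= (/ t - 1) * (1 - p n) ^ (n %/ K); last by rewrite /B; lra.
  by apply: Rmult_le_pos; [lra | apply: pow_le; lra].
apply: Rle_trans (T_bb_le (leq_div n K) p01 t01) _.
apply: Rle_trans (_ : INR n.+1 * sig ^ n <= _).
  rewrite !Rmult_assoc; apply: Rmult_le_compat_l; first exact: pos_INR.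
  apply: Rle_trans (_ : (1 + t) ^ n * (v ^ n * B ^ n) <= _).
    apply: Rmult_le_compat_l; first by apply: pow_le; lra.
    apply: Rmult_le_compat_r; first exact: pow_le.
    by apply: pow_divn_le => //; lra.
  rewrite -!Rpow_mult_distr -Rmult_assoc; apply: pow_incr; split => //.
  by apply: Rmult_le_pos; [apply: Rmult_le_pos|]; lra.
have sig_n : 0 <= sig ^ n by apply: pow_le; lra.
apply: Rle_trans (Rmult_le_compat_r _ _ _ sig_n (HN1 n n1)) _.
rewrite /Rdiv Rpow_mult_distr Rmult_assoc -Rpow_mult_distr Rinv_l; last lra.
by rewrite pow1 Rmult_1_r; exact: Rle_refl.
Qed.

(* Part (b): for p = c/n with c >= 20, take s0 = n/4 and t = 1/2.  Then
   (1-p)^(n/4) <= exp(-4) <= 1/16 and the bracket is at most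
   (3/2) (119/100) (17/16) <= 19/10 < 199/100 = 2 - 1/100. *)
Lemma sparse_case (c : R) : 20 <= c ->
  exists eps : R, 1 / 100 <= eps /\
    exists N : nat, forall n : nat, (N <= n)%N -> T_bb n (c / INR n) <= (2 - eps) ^ n.
Proof.
move=> c20; exists (1 / 100); split; first lra.
rewrite (_ : 2 - 1 / 100 = 199 / 100); last by field.
have [N0 HN0] := INR_unbounded (c + 15).
apply: (@T_bb_eventually_le_pow _ _ (19 / 10) (1 / 2) (119 / 100) 4 N0); try lra.
move=> n nN0.
have n_large : c + 15 < INR n by apply: Rlt_le_trans HN0 _; apply/le_INR/leP.
have n0 : 0 < INR n by lra.
have p01 : 0 <= c / INR n <= 1.
  split; first by apply: Rmult_le_pos; [lra | apply/Rlt_le/Rinv_0_lt_compat].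
  by apply: (Rmult_le_reg_r (INR n)) => //; rewrite /Rdiv Rmult_assoc Rinv_l; lra.
split=> //.
have mean4 : 4 <= c / INR n * INR (n %/ 4).
  apply: (Rmult_le_reg_r (INR n)) => //.
  rewrite (_ : c / INR n * INR (n %/ 4) * INR n = c * INR (n %/ 4)); last by field; lra.
  have := divn_lower_bound n (isT : (0 < 4)%N); rewrite (_ : INR 4 = 4); last by simpl; ring.
  by have := pos_INR (n %/ 4); nra.
have e4 : 16 <= exp 4.
  rewrite (_ : 4 = 1 * INR 4); last by simpl; ring.
  rewrite -exp_pow (_ : 16 = 2 ^ 4); last by simpl; ring.
  by apply: pow_incr; have := exp_ineq1_le 1; lra.
have tail : (1 - c / INR n) ^ (n %/ 4) <= / 16.
  apply: Rle_trans (tail_prob_le p01 mean4) _.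
  by rewrite exp_Ropp; apply: Rinv_le_contravar; lra.
have tail0 : 0 <= (1 - c / INR n) ^ (n %/ 4) by apply: pow_le; lra.
rewrite (_ : / (1 / 2) - 1 = 1); last by field.
lra.
Qed.

(* The bracket of the dense case: once (1-p)^s0 <= eta^2, choosing t = eta and
   v = 1 + eta makes it at most (1+eta)^3 <= 1 + 7 eta. *)
Lemma dense_bracket (eta q : R) : 0 < eta <= 1 -> 0 <= q <= eta * eta ->
  (1 + eta) * (1 + eta) * (1 + (/ eta - 1) * q) <= 1 + 7 * eta.
Proof.
move=> eta01 q_small.
have it1 : 1 <= / eta by rewrite -Rinv_1; apply: Rinv_le_contravar; lra.
have : (/ eta - 1) * q <= eta.
  apply: Rle_trans (_ : / eta * (eta * eta) <= _); first nra.
  by rewrite -Rmult_assoc Rinv_l; lra.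
have : 0 <= (/ eta - 1) * q by apply: Rmult_le_pos; lra.
nra.
Qed.

(* Part (a): given delta > 0, aim at rho = 2^delta with sig = (1 + rho)/2,
   a small eta (so that (1+eta)^3 <= sig) and K > eta^-2, so that
   eta^-1 <= (1+eta)^K; once pn >= K (1 - 2 ln eta) the tail
   (1-p)^(n/K) is at most eta^2. *)
Lemma dense_case (p : nat -> R) :
  (forall n : nat, 0 <= p n <= 1) ->
  (forall M : R, exists N : nat, forall n : nat, (N <= n)%N -> M <= p n * INR n) ->
  forall delta : R, 0 < delta ->
    exists N : nat, forall n : nat, (N <= n)%N -> T_bb n (p n) <= Rpower 2 (delta * INR n).
Proof.
move=> p01 pn_large delta delta0.
set rho := Rpower 2 delta.
have rho1 : 1 < rho by rewrite /rho -(Rpower_O 2); [apply: Rpower_lt|]; lra.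
suff [N HN] : exists N : nat, forall n : nat, (N <= n)%N -> T_bb n (p n) <= rho ^ n.
  exists N => n Nn; rewrite -Rpower_mult Rpower_pow; [exact: HN | exact: exp_pos].
set sig := (1 + rho) / 2; set eta := Rmin 1 ((sig - 1) / 7).
have eta0 : 0 < eta by apply: Rmin_glb_lt; rewrite /sig; lra.
have eta1 : eta <= 1 := Rmin_l _ _.
have eta_sig : eta <= (sig - 1) / 7 := Rmin_r _ _.
have [K HK] := INR_unbounded (/ (eta * eta)).
have HK' : 1 < INR K * (eta * eta).
  have ee : 0 < eta * eta by nra.
  by have := Rmult_lt_compat_r _ _ _ ee HK; rewrite Rinv_l; lra.
have K0 : (0 < K)%N by case: K {HK} HK' => [|K] /=; [lra | ].
have K1 : 1 <= INR K by apply/(le_INR 1)/leP.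
have [N0 HN0] := pn_large (INR K * (1 - 2 * ln eta)).
apply: (@T_bb_eventually_le_pow p rho sig eta (1 + eta) K N0); try (rewrite /sig; lra).
  apply: Rle_trans _ (poly K _ eta0); apply: (Rmult_le_reg_l eta) => //.
  by rewrite Rinv_r; nra.
move=> n nN0; split=> //.
have mean : - (2 * ln eta) <= p n * INR (n %/ K).
  apply: (Rmult_le_reg_r (INR K)); first lra.
  have [p0 p1] := p01 n; have pK : p n * INR K <= INR K by nra.
  by have := HN0 n nN0; have := divn_lower_bound n K0; nra.
have tail : (1 - p n) ^ (n %/ K) <= eta * eta.
  apply: Rle_trans (tail_prob_le (p01 n) mean) _.
  rewrite Ropp_involutive (_ : 2 * ln eta = ln eta + ln eta); last ring.
  by rewrite exp_plus exp_ln //; exact: Rle_refl.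
have tail0 : 0 <= (1 - p n) ^ (n %/ K) by apply: pow_le; have := p01 n; lra.
have := dense_bracket (conj eta0 eta1) (conj tail0 tail).
rewrite /sig in eta_sig |- *; lra.
Qed.

Close Scope R_scope.

Theorem theorem1 :
  (* (a) pn -> infinity implies T(n,p) = 2^{o(n)} *)
  (forall p : nat -> R,
     (forall n : nat, (0 <= p n <= 1)%Re) ->
     (forall M : R, exists N : nat, forall n : nat,
          (N <= n)%N -> (M <= p n * INR n)%Re) ->
     forall delta : R, (0 < delta)%Re ->
       exists N : nat, forall n : nat,
         (N <= n)%N -> (T_bb n (p n) <= Rpower 2 (delta * INR n))%Re)
  /\
  (* (b) p = c/n with constant c >= 20 *)
  (forall c : R, (20 <= c)%Re ->
     exists eps : R, (1 / 100 <= eps)%Re /\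
       exists N : nat, forall n : nat,
         (N <= n)%N -> (T_bb n (c / INR n) <= pow (2 - eps) n)%Re).
Proof. split; [exact: dense_case | exact: sparse_case]. Qed.
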